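(* Let $G_1$ be a finite $k$-graph with $k\ge 3$. Then the line graph $G_2=L(G_1)$ is symmetric with respect to graph entropy, i.e., the uniform distribution on $V(G_2)$ maximizes $H(G_2,P)$ over all probability distributions $P$ on $V(G_2)$.
   Context: A $k$-graph is a $k$-regular graph whose fractional edge-colouring number equals $k$; here the fractional edge-colouring number $\chi'_f(G_1)$ is $\min\{\sum_{M}\lambda_M : \lambda\ge 0,\ \sum_M \lambda_M \mathbf b_M=\mathbf 1\}$, the sum ranging over all matchings $M$ of $G_1$ with characteristic vectors $\mathbf b_M\in\mathbb{R}^{E(G_1)}$. The line graph $L(G_1)$ has vertex set $E(G_1)$, two edges adjacent when they share an endpoint. For a finite graph $G$ with $V(G)=\{1,\dots,n\}$, the vertex packing polytope $VP(G)$ is the convex hull of the characteristic vectors of independent sets of $G$, and for a probability distribution $P$ on $V(G)$ the graph entropy is $H(G,P)=\min_{\mathbf a\in VP(G)}\sum_{i=1}^n p_i\log(1/a_i)$. *)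

From HB Require Import structures.
From mathcomp Require Import all_boot all_order all_algebra.
From mathcomp Require Import classical_sets reals exp.
Set Implicit Arguments. Unset Strict Implicit. Unset Printing Implicit Defensive.
Import Order.TTheory GRing.Theory Num.Theory.
Local Open Scope ring_scope.


Section Defs.
Variable R : realType.

Section Generic.
Variables (T : finType) (g : rel T).

Definition independent (S : {set T}) : bool :=
  [forall x in S, forall y in S, ~~ g x y].

Definition in_VP (a : T -> R) : Prop :=
  exists lam : {set T} -> R,
    [/\ forall S, 0 <= lam S,
        forall S, ~~ independent S -> lam S = 0,
        \sum_(S : {set T}) lam S = 1
      & forall i, a i = \sum_(S : {set T}) lam S * (i \in S)%:R].

Definition is_distribution (P : T -> R) : Prop :=
  (forall i, 0 <= P i) /\ \sum_(i : T) P i = 1.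

(* H(g,P) = min_{a in VP} sum_i p_i log(1/a_i), with 0 log(1/0) = 0;
   points a with a_i = 0 < p_i give value +oo and are omitted *)
Definition graph_entropy (P : T -> R) : R :=
  inf ([set h : R | exists a : T -> R,
         [/\ in_VP a, (forall i, 0 < P i -> 0 < a i)
           & h = \sum_(i : T) P i * ln ((a i)^-1)]])%classic.

Definition uniform_distr : T -> R := fun _ => (#|T|%:R)^-1.

Definition entropy_symmetric : Prop :=
  forall P : T -> R, is_distribution P ->
    graph_entropy P <= graph_entropy uniform_distr.
End Generic.

Section LineGraph.
Variables (V : finType) (e : rel V).

Definition is_edge (A : {set V}) : bool :=
  [exists x, exists y, e x y && (A == [set x; y])].

Definition edge_t : finType := {A : {set V} | is_edge A}.

Definition line_rel : rel edge_t :=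
  fun A B => (A != B) && [exists x, (x \in val A) && (x \in val B)].

Definition matching (M : {set edge_t}) : bool :=
  [forall A in M, forall B in M, (A != B) ==> [disjoint val A & val B]].

Definition frac_edge_chromatic : R :=
  inf ([set s : R | exists lam : {set edge_t} -> R,
         [/\ forall M, 0 <= lam M,
             forall M, ~~ matching M -> lam M = 0,
             forall f : edge_t, \sum_(M : {set edge_t}) lam M * (f \in M)%:R = 1
           & s = \sum_(M : {set edge_t}) lam M]])%classic.

Definition regular (k : nat) : Prop := forall x, #|[set y | e x y]| = k.

Definition k_graph (k : nat) : Prop :=
  regular k /\ frac_edge_chromatic = k%:R.
End LineGraph.
End Defs.

From HB Require Import structures.
From mathcomp Require Import all_boot all_order all_algebra.
From mathcomp Require Import classical_sets reals exp.
From mathcomp Require Import lra.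
From mathcomp Require sequences.
Set Implicit Arguments. Unset Strict Implicit. Unset Printing Implicit Defensive.
Import Order.TTheory GRing.Theory Num.Theory.

(** For every P, the constant vector 1/s built from a fractional edge colouring
    of weight s lies in VP(L(G1)), because matchings are independent in the line
    graph; hence H(L(G1), P) <= ln s and so H(L(G1), P) <= ln chi'_f(G1) = ln k.
    Conversely an independent set of L(G1) is a matching, so it has at most
    |V|/2 = |E|/k elements; every a in VP(L(G1)) thus has total mass at most
    |E|/k, and ln(1/a) >= ln k + 1 - k a (that is, ln x <= x - 1) gives
    H(L(G1), uniform) >= ln k. *)

Local Open Scope ring_scope.

Lemma lnV_ge_tangent (R : realType) (k x : R) : 0 < k -> 0 < x ->
  ln k + 1 - k * x <= ln x^-1.
Proof.
move=> k_gt0 x_gt0; have kx_gt0 : 0 < k * x by rewrite mulr_gt0.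
have := @le_ln1Dx R (k * x - 1); rewrite [1 + _]addrC subrK lnM ?posrE // lnV ?posrE //.
have : -1 < k * x - 1 by rewrite ltrBrDr addrC subrr.
by move=> lt /(_ lt); lra.
Qed.

Section GraphEntropy.
Variables (R : realType) (T : finType) (g : rel T).

Definition entropy_values (P : T -> R) : set R :=
  [set h : R | exists a : T -> R,
     [/\ in_VP g a, (forall i, 0 < P i -> 0 < a i)
       & h = \sum_(i : T) P i * ln ((a i)^-1)]]%classic.

Definition frac_cover (lam : {set T} -> R) (s : R) : Prop :=
  [/\ forall S, 0 <= lam S,
      forall S, ~~ independent g S -> lam S = 0,
      forall i, \sum_(S : {set T}) lam S * (i \in S)%:R = 1
    & s = \sum_(S : {set T}) lam S].

Lemma uniform_distr_is_distribution : T -> is_distribution (uniform_distr R (T:=T)).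
Proof.
move=> i0; split=> [i|]; first by rewrite invr_ge0 ler0n.
rewrite sumr_const -[X in _ *+ X]/#|T| -(mulr_natr (#|T|%:R^-1)) mulVf //.
rewrite pnatr_eq0 -lt0n.
by apply/card_gt0P; exists i0.
Qed.

Lemma in_VP_bounds (a : T -> R) : in_VP g a -> forall i, 0 <= a i <= 1.
Proof.
move=> [lam [lam_ge0 _ lam_sum1 a_def]] i; rewrite a_def; apply/andP; split.
  by apply: sumr_ge0 => S _; rewrite mulr_ge0.
rewrite -[X in _ <= X]lam_sum1; apply: ler_sum => S _.
by have := lam_ge0 S; case: (i \in S); rewrite ?mulr1 ?mulr0.
Qed.

Lemma entropy_values_ge0 (P : T -> R) : is_distribution P -> lbound (entropy_values P) 0.
Proof.
move=> [P_ge0 _] _ [a [VPa a_gt0 ->]]; apply: sumr_ge0 => i _.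
have [<-|Pi_gt0] := eqVneq 0 (P i); first by rewrite mul0r.
have {}Pi_gt0 : 0 < P i by rewrite lt_def eq_sym Pi_gt0 P_ge0.
have /andP [_ ai_le1] := in_VP_bounds VPa i.
apply: mulr_ge0; first exact: ltW.
by apply: ln_ge0; rewrite invf_ge1 ?a_gt0.
Qed.

Lemma frac_cover_gt0 lam s : frac_cover lam s -> T -> 0 < s.
Proof.
move=> [lam_ge0 _ lam_cover ->] i; apply: (@lt_le_trans _ _ 1) => //.
rewrite -(lam_cover i); apply: ler_sum => S _.
by have := lam_ge0 S; case: (i \in S); rewrite ?mulr1 ?mulr0.
Qed.

Lemma frac_cover_in_VP lam s : frac_cover lam s -> T -> in_VP g (fun=> s^-1).
Proof.
move=> cover i0; have s_gt0 := frac_cover_gt0 cover i0.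
case: cover => [lam_ge0 lam_indep lam_cover s_def].
exists (fun S => lam S / s); split.
- by move=> S; rewrite divr_ge0 ?lam_ge0 ?ltW.
- by move=> S /lam_indep ->; rewrite mul0r.
- by rewrite -mulr_suml -s_def mulfV ?gt_eqF.
- by move=> i; under eq_bigr do rewrite mulrAC; rewrite -mulr_suml lam_cover mul1r.
Qed.

Lemma ln_frac_cover_in_entropy_values P lam s :
  is_distribution P -> frac_cover lam s -> T -> entropy_values P (ln s).
Proof.
move=> [_ P_sum1] cover i0; have s_gt0 := frac_cover_gt0 cover i0.
exists (fun=> s^-1); split.
- exact: frac_cover_in_VP cover i0.
- by move=> i _; rewrite invr_gt0.
- by rewrite invrK -mulr_suml P_sum1 mul1r.
Qed.

Lemma graph_entropy_le_ln_frac_cover P lam s :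
  is_distribution P -> frac_cover lam s -> T -> graph_entropy g P <= ln s.
Proof.
move=> distrP cover i0; apply: ge_inf.
  by exists 0; apply: entropy_values_ge0.
exact: ln_frac_cover_in_entropy_values cover i0.
Qed.

End GraphEntropy.

Section IndependenceBound.
Variables (R : realType) (T : finType) (g : rel T) (k : R).
Hypothesis k_gt0 : 0 < k.
Hypothesis T_gt0 : (0 < #|T|)%N.
Hypothesis indep_small : forall S, independent g S -> k * #|S|%:R <= #|T|%:R.

Lemma in_VP_sum_le (a : T -> R) : in_VP g a -> k * \sum_i a i <= #|T|%:R.
Proof.
move=> [lam [lam_ge0 lam_indep lam_sum1 a_def]].
have -> : \sum_i a i = \sum_S lam S * #|S|%:R.
  under eq_bigr do rewrite a_def; rewrite exchange_big /=.
  apply: eq_bigr => S _; rewrite -mulr_sumr -sum1_card natr_sum; congr (_ * _).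
  by rewrite [RHS]big_mkcond; apply: eq_bigr => i _; case: (i \in S).
apply: (@le_trans _ _ (\sum_S lam S * #|T|%:R)); last by rewrite -mulr_suml lam_sum1 mul1r.
rewrite mulr_sumr; apply: ler_sum => S _.
have [indS|/lam_indep ->] := boolP (independent g S); last by rewrite !(mul0r, mulr0).
by rewrite mulrCA ler_wpM2l ?lam_ge0 ?indep_small.
Qed.

Lemma ln_le_entropy_values_uniform h :
  entropy_values g (uniform_distr R (T:=T)) h -> ln k <= h.
Proof.
move=> [a [VPa a_gt0 ->]]; set n : R := #|T|%:R.
have n_gt0 : 0 < n by rewrite ltr0n.
have {}a_gt0 i : 0 < a i by apply: a_gt0; rewrite /uniform_distr invr_gt0.
apply: (@le_trans _ _ (\sum_i n^-1 * (ln k + 1 - k * a i))); last first.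
  apply: ler_sum => i _; apply: ler_wpM2l; first by rewrite invr_ge0 ltW.
  exact: lnV_ge_tangent.
rewrite -mulr_sumr sumrB sumr_const -mulr_sumr -mulr_natr -/n mulrBr mulrCA.
rewrite mulVf ?gt_eqF // mulr1.
have : n^-1 * (k * \sum_i a i) <= 1 by rewrite ler_pdivrMl // mulr1 in_VP_sum_le.
lra.
Qed.

Lemma ln_le_graph_entropy_uniform :
  (entropy_values g (uniform_distr R (T:=T)) !=set0)%classic ->
  ln k <= graph_entropy g (uniform_distr R (T:=T)).
Proof. by move=> ne; apply: lb_le_inf => // h; apply: ln_le_entropy_values_uniform. Qed.

End IndependenceBound.

Lemma le_ln_inf (R : realType) (A : set R) (x : R) : (A !=set0)%classic ->
  (forall s, A s -> 0 < s /\ x <= ln s) -> x <= ln (inf A).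
Proof.
move=> A_ne A_ge; have expx_le : sequences.expR x <= inf A.
  apply: lb_le_inf => // s /A_ge [s_gt0 x_le].
  by rewrite -[leRHS]lnK ?posrE // ler_expR.
have inf_gt0 := lt_le_trans (expR_gt0 x) expx_le.
by rewrite -ler_ln ?posrE ?expR_gt0 // expRK in expx_le.
Qed.

Section LineGraph.
Variables (V : finType) (e : rel V).
Hypotheses (e_sym : symmetric e) (e_irr : irreflexive e).

Lemma edge_at (A : edge_t e) x : x \in val A ->
  exists2 y, e x y & val A = [set x; y].
Proof.
case: A => /= A /existsP [a /existsP [b /andP [eab /eqP ->]]].
rewrite !inE => /orP [/eqP -> | /eqP ->]; first by exists b.
by exists a; rewrite 1?e_sym // finset.setUC.
Qed.

Lemma card_edge (A : edge_t e) : #|val A| = 2.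
Proof.
case: A => /= A /existsP [a /existsP [b /andP [eab /eqP ->]]].
by rewrite cards2; case: eqP eab => [->|]; rewrite ?e_irr.
Qed.

Lemma sum_card_edges (S : {set edge_t e}) :
  \sum_(A in S) #|val A| = \sum_x #|[set A in S | x \in val A]|.
Proof.
transitivity (\sum_(A in S) \sum_x (x \in val A : nat)).
  by apply: eq_bigr => A _; rewrite -sum1_card big_mkcond.
rewrite exchange_big /=; apply: eq_bigr => x _.
rewrite -sum1_card big_mkcond [RHS]big_mkcond /=; apply: eq_bigr => A _.
by rewrite inE; case: (A \in S); case: (x \in val A).
Qed.

Definition other_end x (A : edge_t e) : V := odflt x [pick y in val A :\ x].

Lemma other_endP x (A : edge_t e) : x \in val A ->
  e x (other_end x A) /\ val A = [set x; other_end x A].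
Proof.
rewrite /other_end => /edge_at [y exy ->].
have xy : x != y by apply: contraTneq exy => <-; rewrite e_irr.
rewrite setU1K ?inE //.
by case: pickP => [z|/(_ y)]; rewrite !inE ?eqxx // => /eqP ->.
Qed.

Lemma card_edges_at x : #|[set A : edge_t e | x \in val A]| = #|[set y | e x y]|.
Proof.
have -> : [set y | e x y] = other_end x @: [set A : edge_t e | x \in val A].
  apply/setP => y; rewrite inE; apply/idP/imsetP => [exy|[A]]; last first.
    by rewrite inE => /other_endP [+ _] ->.
  have xy_edge : is_edge e [set x; y].
    by apply/existsP; exists x; apply/existsP; exists y; rewrite exy eqxx.
  pose A : edge_t e := exist (fun B : {set V} => is_edge e B) _ xy_edge.
  have xA : x \in val A by rewrite !inE eqxx.
  have xy : x != y by apply: contraTneq exy => <-; rewrite e_irr.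
  exists A; first by rewrite inE.
  have [_ /setP /(_ y)] := other_endP xA.
  by rewrite !inE eqxx orbT eq_sym (negbTE xy) => /esym /eqP.
rewrite card_in_imset // => A B; rewrite !inE => /other_endP [_ hA] /other_endP [_ hB].
by move=> eq_other; apply: val_inj; rewrite hA hB eq_other.
Qed.

Lemma handshake k : regular e k -> (#|edge_t e| * 2 = #|V| * k)%N.
Proof.
move=> reg; have := sum_card_edges [set: edge_t e].
rewrite (eq_bigr (fun _ => 2%N)); last by move=> A _; rewrite card_edge.
rewrite sum_nat_const cardsT => ->.
rewrite (eq_bigr (fun _ => k)) ?sum_nat_const // => x _.
by rewrite -(reg x) -card_edges_at; apply: eq_card => A; rewrite !inE.
Qed.

Lemma card_independent_line_le (S : {set edge_t e}) :
  independent (line_rel (e:=e)) S -> (#|S| * 2 <= #|V|)%N.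
Proof.
move=> /forallP indS; have := sum_card_edges S.
rewrite (eq_bigr (fun _ => 2%N)); last by move=> A _; rewrite card_edge.
rewrite sum_nat_const => ->; rewrite -[leqRHS]sum1_card; apply: leq_sum => x _.
apply/card_le1_eqP => A B; rewrite !inE => /andP [AS xA] /andP [BS xB].
move: (indS A); rewrite AS => /forallP /(_ B); rewrite BS /line_rel negb_and negbK.
by case/orP => [/eqP //|/existsPn /(_ x)]; rewrite xA xB.
Qed.

Lemma matching_independent (M : {set edge_t e}) :
  matching M -> independent (line_rel (e:=e)) M.
Proof.
move=> /forallP matM; apply/forallP => A; apply/implyP => AM.
apply/forallP => B; apply/implyP => BM; rewrite /line_rel negb_and.
move: (matM A); rewrite AM => /forallP /(_ B); rewrite BM /= => /implyP disj.
have [//|/disj /disjoint_setI0 AB0] := eqVneq A B; apply/orP; right.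
apply/existsPn => x; apply/negP => /andP [xA xB].
by move/setP: AB0 => /(_ x); rewrite !inE xA xB.
Qed.

Lemma regular_independent_line_le k (S : {set edge_t e}) :
  regular e k -> independent (line_rel (e:=e)) S -> (k * #|S| <= #|edge_t e|)%N.
Proof.
move=> /handshake edgesE /card_independent_line_le S_le.
rewrite -(leq_pmul2r (isT : (0 < 2)%N)) -mulnA edgesE [leqRHS]mulnC leq_mul2l.
by rewrite S_le orbT.
Qed.

Variable R : realType.

Definition frac_edge_colouring_weights : set R :=
  [set s : R | exists lam : {set edge_t e} -> R,
     [/\ forall M, 0 <= lam M,
         forall M, ~~ matching M -> lam M = 0,
         forall f : edge_t e, \sum_(M : {set edge_t e}) lam M * (f \in M)%:R = 1
       & s = \sum_(M : {set edge_t e}) lam M]]%classic.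

Lemma frac_edge_chromaticE :
  frac_edge_chromatic R e = inf frac_edge_colouring_weights.
Proof. by []. Qed.

Lemma frac_edge_colouring_frac_cover s : frac_edge_colouring_weights s ->
  exists lam, frac_cover (line_rel (e:=e)) lam s.
Proof.
move=> [lam [lam_ge0 lam_match lam_cover s_def]]; exists lam; split=> //.
move=> M not_indep; apply: lam_match; apply: contra not_indep.
exact: matching_independent.
Qed.

Lemma graph_entropy_line_le_ln_frac_edge_chromatic (P : edge_t e -> R) :
  is_distribution P -> edge_t e -> (frac_edge_colouring_weights !=set0)%classic ->
  graph_entropy (line_rel (e:=e)) P <= ln (frac_edge_chromatic R e).
Proof.
move=> distrP f0 colourings_ne; apply: le_ln_inf => // s.
move=> /frac_edge_colouring_frac_cover [lam cover]; split.
  exact: frac_cover_gt0 cover f0.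
exact: graph_entropy_le_ln_frac_cover cover f0.
Qed.

End LineGraph.

Theorem mainTheorem5 (R : realType) (V : finType) (e : rel V) (k : nat) :
  symmetric e -> irreflexive e -> (3 <= k)%N -> @k_graph R V e k ->
  @entropy_symmetric R (edge_t e) (@line_rel V e).
Proof.
move=> e_sym e_irr k_ge3 [reg chi_k] P distrP.
have [f0 _|no_edge] := pickP (@predT (edge_t e)); last first.
  suff -> : P = uniform_distr R (T:=edge_t e) by [].
  by apply: boolp.funext => f; have := no_edge f.
have k_gt0 : (0 < k)%N by apply: leq_trans k_ge3.
have [s colouring_s] : (@frac_edge_colouring_weights _ e R !=set0)%classic.
  apply/set0P; apply: contra_eqN chi_k => /eqP no_colouring.
  by rewrite frac_edge_chromaticE no_colouring inf0 eq_sym pnatr_eq0 -lt0n.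
apply: (@le_trans _ _ (ln k%:R)).
  rewrite -chi_k; apply: graph_entropy_line_le_ln_frac_edge_chromatic => //.
  by exists s.
apply: ln_le_graph_entropy_uniform.
- by rewrite ltr0n.
- by apply/card_gt0P; exists f0.
- by move=> S indS; rewrite -natrM ler_nat regular_independent_line_le.
- have [lam cover] := frac_edge_colouring_frac_cover colouring_s.
  exists (ln s).
  exact: ln_frac_cover_in_entropy_values (@uniform_distr_is_distribution R _ f0) cover f0.
Qed.
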